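(* Let $R$ be a unital associative ring and $$A=\begin{pmatrix}1&1&1\\1&a&b\\1&c&d\end{pmatrix}\in M_3(R).$$ Then all $1\times1$ and $2\times2$ submatrices of $A$ are invertible if and only if the elements $a,b,c,d,a-1,b-1,c-1,d-1,d-c,d-b,c-a,b-a$ and $db^{-1}-ca^{-1}$ are invertible in $R$. Furthermore, if all $1\times1$ and $2\times2$ submatrices of $A$ are invertible, then $$A\text{ is invertible}\iff (d-c)^{-1}(c-1)-(b-a)^{-1}(a-1)\in R^*,$$ $$J_2(A)\text{ is invertible}\iff (c-1)(d-c)^{-1}d-(a-1)(b-a)^{-1}b\in R^*.$$ In particular, $A\in\widehat{\cal S}$ if and only if the $15$ elements $a,b,c,d,a-1,b-1,c-1,d-1,d-c,d-b,c-a,b-a,db^{-1}-ca^{-1}$, $(d-c)^{-1}(c-1)-(b-a)^{-1}(a-1)$ and $(c-1)(d-c)^{-1}d-(a-1)(b-a)^{-1}b$ are invertible in $R$.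
   Context: $R^*$ denotes the units of $R$. For $M\in M_3(R)$ with all entries in $R^*$, $J_2(M)$ is the matrix with $(j,k)$-entry $(M_{kj})^{-1}$. ${\cal S}=\{M\in M_3(R):$ all square submatrices of $M$ are invertible and $J_2(M)$ is invertible$\}$, $\widehat M_3(R)$ is the set of $3\times3$ matrices whose first row and column consist of $1$'s, and $\widehat{\cal S}={\cal S}\cap\widehat M_3(R)$. *)

From HB Require Import structures.
From mathcomp Require Import all_boot all_order all_algebra.
Set Implicit Arguments. Unset Strict Implicit. Unset Printing Implicit Defensive.
Import GRing.Theory.
Local Open Scope ring_scope.

Section Defs.
Variable R : unitRingType.

Definition mx_invertible n (M : 'M[R]_n) : Prop :=
  exists N : 'M[R]_n, M *m N = 1%:M /\ N *m M = 1%:M.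

Definition all_sub_invertible (k m n : nat) (M : 'M[R]_(m, n)) : Prop :=
  forall (f : 'I_k -> 'I_m) (g : 'I_k -> 'I_n),
    (forall i j : 'I_k, (i < j)%N -> (f i < f j)%N) ->
    (forall i j : 'I_k, (i < j)%N -> (g i < g j)%N) ->
    mx_invertible (mxsub f g M).

Definition J2 (M : 'M[R]_3) : 'M[R]_3 := \matrix_(j, k) (M k j)^-1.

Definition in_S (M : 'M[R]_3) : Prop :=
  [/\ all_sub_invertible 1 M, all_sub_invertible 2 M, all_sub_invertible 3 M
    & mx_invertible (J2 M)].

Definition in_hatM3 (M : 'M[R]_3) : Prop :=
  forall i : 'I_3, M ord0 i = 1 /\ M i ord0 = 1.

Definition in_hatS (M : 'M[R]_3) : Prop := in_S M /\ in_hatM3 M.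

Definition Amx (a b c d : R) : 'M[R]_3 :=
  \matrix_(i < 3, j < 3)
    [fun ij : nat * nat => 1 with (1%N, 1%N) |-> a, (1%N, 2%N) |-> b,
                                   (2%N, 1%N) |-> c, (2%N, 2%N) |-> d]
    (nat_of_ord i, nat_of_ord j).

End Defs.

(* Everything reduces to 2 x 2 matrices by row and column operations. A block
   matrix [[1, B], [C, D]] is invertible iff its Schur complement D - C B is;
   hence A = [[1, 1, 1], [1, a, b], [1, c, d]] is invertible iff
   [[a - 1, b - 1], [c - 1, d - 1]] is, and [[1, y], [x, z]] iff z - x y is a
   unit. Subtracting one column (row) from the other and rescaling the rows
   (columns) by the units (b - a)^-1, (d - c)^-1 (resp. (b^-1 - a^-1)^-1,
   (d^-1 - c^-1)^-1) brings the 2 x 2 matrix to the shape [[x, 1], [y, 1]]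
   (resp. [[x, y], [1, 1]]), invertible iff y - x is a unit. J_2(A) has the
   same shape as A, with a, b, c, d replaced by a^-1, c^-1, b^-1, d^-1. The nine
   2 x 2 minors of A all have one of the shapes [[1, 1], [x, y]],
   [[1, x], [1, y]] or [[a, b], [c, d]]. *)
From Corelib Require Import Setoid.
From mathcomp Require Import all_boot all_order all_algebra zify.
Set Implicit Arguments. Unset Strict Implicit. Unset Printing Implicit Defensive.
Import GRing.Theory.
Local Open Scope ring_scope.

Section TwoSidedInverse.
Variable R : unitRingType.

Lemma mx_invertible1 n : mx_invertible (1%:M : 'M[R]_n).
Proof. by exists 1%:M; rewrite mulmx1. Qed.

Lemma mx_invertible_mulmx n (P Q : 'M[R]_n) :
  mx_invertible P -> mx_invertible Q -> mx_invertible (P *m Q).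
Proof.
move=> [P' [PP' P'P]] [Q' [QQ' Q'Q]]; exists (Q' *m P'); split.
  by rewrite mulmxA -(mulmxA P) QQ' mulmx1.
by rewrite mulmxA -(mulmxA Q') P'P mulmx1.
Qed.

Lemma mx_invertible_mulmxl n (P M : 'M[R]_n) :
  mx_invertible P -> mx_invertible (P *m M) <-> mx_invertible M.
Proof.
move=> invP; split=> [invPM | invM]; last exact: mx_invertible_mulmx.
have [P' [PP' P'P]] := invP.
have -> : M = P' *m (P *m M) by rewrite mulmxA P'P mul1mx.
by apply: mx_invertible_mulmx invPM; exists P.
Qed.

Lemma mx_invertible_mulmxr n (M Q : 'M[R]_n) :
  mx_invertible Q -> mx_invertible (M *m Q) <-> mx_invertible M.
Proof.
move=> invQ; split=> [invMQ | invM]; last exact: mx_invertible_mulmx.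
have [Q' [QQ' Q'Q]] := invQ.
have -> : M = (M *m Q) *m Q' by rewrite -mulmxA QQ' mulmx1.
by apply: mx_invertible_mulmx invMQ _; exists Q.
Qed.

Lemma mx_invertible_scalar (x : R) :
  mx_invertible (x%:M : 'M_1) <-> x \is a GRing.unit.
Proof.
split=> [[N [xN Nx]] | ux].
  apply/unitrP; exists (N 0 0); rewrite [N]mx11_scalar -!scalar_mxM in xN Nx.
  by move: xN Nx => /matrixP/(_ 0 0) + /matrixP/(_ 0 0); rewrite !mxE /= !mulr1n.
by exists x^-1%:M; rewrite -!scalar_mxM mulrV ?mulVr.
Qed.

Lemma mx_invertible11 (M : 'M[R]_1) : mx_invertible M <-> M 0 0 \is a GRing.unit.
Proof. by rewrite [M in mx_invertible M]mx11_scalar mx_invertible_scalar. Qed.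

Lemma mx_invertible_block_diag m n (A : 'M[R]_m) (B : 'M[R]_n) :
  mx_invertible (block_mx A 0 0 B) <-> mx_invertible A /\ mx_invertible B.
Proof.
split=> [[N [MN NM]] | [[A' [AA' A'A]] [B' [BB' B'B]]]].
  rewrite -[N]submxK !mulmx_block scalar_mx_block in MN.
  rewrite -[N]submxK !mulmx_block scalar_mx_block in NM.
  rewrite !(mul0mx, mulmx0, addr0, add0r) in MN NM.
  have [AN1 _ _ BN4] := eq_block_mx MN; have [N1A _ _ N4B] := eq_block_mx NM.
  by split; [exists (ulsubmx N) | exists (drsubmx N)].
exists (block_mx A' 0 0 B'); rewrite !mulmx_block scalar_mx_block.
by rewrite !(mul0mx, mulmx0, addr0, add0r) AA' A'A BB' B'B.
Qed.

Lemma mx_invertible_block_lower m n (C : 'M[R]_(n, m)) :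
  mx_invertible (block_mx 1%:M 0 C 1%:M).
Proof.
exists (block_mx 1%:M 0 (- C) 1%:M); rewrite !mulmx_block scalar_mx_block.
by rewrite !(mul0mx, mulmx0, mul1mx, mulmx1, addr0, add0r, addrN, addNr).
Qed.

Lemma mx_invertible_block_upper m n (B : 'M[R]_(m, n)) :
  mx_invertible (block_mx 1%:M B 0 1%:M).
Proof.
exists (block_mx 1%:M (- B) 0 1%:M); rewrite !mulmx_block scalar_mx_block.
by rewrite !(mul0mx, mulmx0, mul1mx, mulmx1, addr0, add0r, addrN, addNr).
Qed.

Lemma mx_invertible_schur m n (B : 'M[R]_(m, n)) (C : 'M[R]_(n, m)) (D : 'M[R]_n) :
  mx_invertible (block_mx 1%:M B C D) <-> mx_invertible (D - C *m B).
Proof.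
rewrite -(mx_invertible_mulmxl (block_mx 1%:M B C D) (mx_invertible_block_lower (- C))).
rewrite -(mx_invertible_mulmxr _ (mx_invertible_block_upper (- B))).
rewrite !mulmx_block !(mul0mx, mulmx0, mul1mx, mulmx1, addr0, add0r).
rewrite !addNr mul0mx add0r mulNmx addrC mx_invertible_block_diag.
by split=> [[] // | invS]; split; first exact: mx_invertible1.
Qed.

End TwoSidedInverse.

Section Matrix2.
Variable R : unitRingType.

(* [mx2 x y z w] is the matrix [[x, y], [z, w]], built from 1 x 1 blocks so
   that the block lemmas above apply to it. *)
Definition mx2 (x y z w : R) : 'M[R]_2 := @block_mx R 1 1 1 1 x%:M y%:M z%:M w%:M.

Lemma mx2_eta (M : 'M[R]_2) : M = mx2 (M 0 0) (M 0 1) (M 1 0) (M 1 1).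
Proof.
rewrite -{1}(@submxK _ 1 1 1 1 M) /mx2; f_equal; rewrite [LHS]mx11_scalar !mxE;
  by congr (M _ _)%:M; apply: val_inj.
Qed.

Lemma mx2_mul x y z w x' y' z' w' :
  mx2 x y z w *m mx2 x' y' z' w' =
  mx2 (x * x' + y * z') (x * y' + y * w') (z * x' + w * z') (z * y' + w * w').
Proof. by rewrite /mx2 (@mulmx_block _ 1 1 1 1 1 1) -!scalar_mxM -!raddfD. Qed.

Lemma mx2_1 : 1%:M = mx2 1 0 0 1.
Proof. by rewrite /mx2 raddf0 -(@scalar_mx_block _ 1 1). Qed.

Lemma mx2_sub x y z w x' y' z' w' :
  mx2 x y z w - mx2 x' y' z' w' = mx2 (x - x') (y - y') (z - z') (w - w').
Proof.
by rewrite /mx2 (@opp_block_mx _ 1 1 1 1) (@add_block_mx _ 1 1 1 1) -!raddfN -!raddfD.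
Qed.

Lemma mx_invertible_mx2_schur x y z :
  mx_invertible (mx2 1 y x z) <-> z - x * y \is a GRing.unit.
Proof.
by rewrite /mx2 (@mx_invertible_schur _ 1 1) -scalar_mxM -raddfB mx_invertible_scalar.
Qed.

Lemma mx_invertible_mx2_diag e f :
  e \is a GRing.unit -> f \is a GRing.unit -> mx_invertible (mx2 e 0 0 f).
Proof.
move=> ue uf; rewrite /mx2 raddf0 (@mx_invertible_block_diag _ 1 1).
by rewrite !mx_invertible_scalar.
Qed.

Lemma mx_invertible_mx2_swap : mx_invertible (mx2 0 1 1 0).
Proof.
by exists (mx2 0 1 1 0); rewrite mx2_mul mx2_1 !(mul0r, mul1r, add0r, addr0).
Qed.

Lemma mx_invertible_mx2_swapc x y z w :
  mx_invertible (mx2 y x w z) <-> mx_invertible (mx2 x y z w).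
Proof.
rewrite -(mx_invertible_mulmxr (mx2 x y z w) mx_invertible_mx2_swap) mx2_mul.
by rewrite !(mulr0, mulr1, add0r, addr0).
Qed.

Lemma mx_invertible_mx2_swapr x y z w :
  mx_invertible (mx2 z w x y) <-> mx_invertible (mx2 x y z w).
Proof.
rewrite -(mx_invertible_mulmxl (mx2 x y z w) mx_invertible_mx2_swap) mx2_mul.
by rewrite !(mul0r, mul1r, add0r, addr0).
Qed.

Lemma mx_invertible_mx2_scalec e f x y z w :
    e \is a GRing.unit -> f \is a GRing.unit ->
  mx_invertible (mx2 (x * e) (y * f) (z * e) (w * f)) <-> mx_invertible (mx2 x y z w).
Proof.
move=> ue uf.
rewrite -(mx_invertible_mulmxr (mx2 x y z w) (mx_invertible_mx2_diag ue uf)).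
by rewrite mx2_mul !(mulr0, add0r, addr0).
Qed.

Lemma mx_invertible_mx2_scaler e f x y z w :
    e \is a GRing.unit -> f \is a GRing.unit ->
  mx_invertible (mx2 (e * x) (e * y) (f * z) (f * w)) <-> mx_invertible (mx2 x y z w).
Proof.
move=> ue uf.
rewrite -(mx_invertible_mulmxl (mx2 x y z w) (mx_invertible_mx2_diag ue uf)).
by rewrite mx2_mul !(mul0r, add0r, addr0).
Qed.

Lemma mx_invertible_mx2_subc x y z w :
  mx_invertible (mx2 x (y - x) z (w - z)) <-> mx_invertible (mx2 x y z w).
Proof.
have inv_elim : mx_invertible (mx2 1 (-1) 0 1).
  by rewrite /mx2 raddf0; apply: (@mx_invertible_block_upper _ 1 1).
rewrite -(mx_invertible_mulmxr (mx2 x y z w) inv_elim) mx2_mul.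
by rewrite !(mulr0, mulr1, mulrN1, addr0) ![- _ + _]addrC.
Qed.

Lemma mx_invertible_mx2_subr x y z w :
  mx_invertible (mx2 x y (z - x) (w - y)) <-> mx_invertible (mx2 x y z w).
Proof.
have inv_elim : mx_invertible (mx2 1 0 (-1) 1).
  by rewrite /mx2 raddf0; apply: (@mx_invertible_block_lower _ 1 1).
rewrite -(mx_invertible_mulmxl (mx2 x y z w) inv_elim) mx2_mul.
by rewrite !(mul0r, mul1r, mulN1r, add0r, addr0) ![- _ + _]addrC.
Qed.

Lemma mx_invertible_mx2_11xy x y :
  mx_invertible (mx2 1 1 x y) <-> y - x \is a GRing.unit.
Proof. by rewrite mx_invertible_mx2_schur mulr1. Qed.

Lemma mx_invertible_mx2_1x1y x y :
  mx_invertible (mx2 1 x 1 y) <-> y - x \is a GRing.unit.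
Proof. by rewrite mx_invertible_mx2_schur mul1r. Qed.

Lemma mx_invertible_mx2_x1y1 x y :
  mx_invertible (mx2 x 1 y 1) <-> y - x \is a GRing.unit.
Proof. by rewrite -mx_invertible_mx2_swapc mx_invertible_mx2_1x1y. Qed.

Lemma mx_invertible_mx2_xy11 x y :
  mx_invertible (mx2 x y 1 1) <-> y - x \is a GRing.unit.
Proof. by rewrite -mx_invertible_mx2_swapr mx_invertible_mx2_11xy. Qed.

Lemma mx_invertible_mx2_unit_row a b c d :
    a \is a GRing.unit -> b \is a GRing.unit ->
  mx_invertible (mx2 a b c d) <-> d * b^-1 - c * a^-1 \is a GRing.unit.
Proof.
move=> ua ub; rewrite -(@mx_invertible_mx2_scalec a^-1 b^-1) ?unitrV //.
by rewrite !mulrV // mx_invertible_mx2_11xy.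
Qed.

End Matrix2.

Lemma homo_ltn_ord_ge n (f : 'I_n -> 'I_n) :
  (forall i j : 'I_n, (i < j)%N -> (f i < f j)%N) -> forall i : 'I_n, (i <= f i)%N.
Proof.
move=> f_homo [i]; elim: i => [// | i IH] lt_in.
have lt_in' := ltnW lt_in.
exact: leq_ltn_trans (IH lt_in') (f_homo (Ordinal lt_in') (Ordinal lt_in) _).
Qed.

(* The upper bound is the lower bound for the mirror image [rev_ord \o f \o rev_ord]. *)
Lemma homo_ltn_ord_id n (f : 'I_n -> 'I_n) :
  (forall i j : 'I_n, (i < j)%N -> (f i < f j)%N) -> f =1 id.
Proof.
move=> f_homo i; apply: val_inj; apply/eqP.
rewrite eqn_leq (homo_ltn_ord_ge f_homo) andbT.
have rev_homo (j k : 'I_n) :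
    (j < k)%N -> (rev_ord (f (rev_ord j)) < rev_ord (f (rev_ord k)))%N.
  move=> lt_jk; have /= := f_homo (rev_ord k) (rev_ord j).
  have := ltn_ord (f (rev_ord j)); have := ltn_ord k; lia.
have /= := homo_ltn_ord_ge rev_homo (rev_ord i); rewrite rev_ordK.
have := ltn_ord (f i); have := ltn_ord i; lia.
Qed.

Section SubInvertible.
Variable R : unitRingType.

Lemma all_sub_invertible1P m n (M : 'M[R]_(m, n)) :
  all_sub_invertible 1 M <-> forall i j, M i j \is a GRing.unit.
Proof.
have homo1 (h : 'I_1 -> nat) (i j : 'I_1) : (i < j)%N -> (h i < h j)%N by rewrite !ord1.
split=> [M1 i j | Munit f g _ _].
  by have /mx_invertible11 := M1 (fun=> i) (fun=> j) (homo1 _) (homo1 _); rewrite mxE.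
by rewrite mx_invertible11 mxE.
Qed.

Lemma all_sub_invertible2P m n (M : 'M[R]_(m, n)) :
  all_sub_invertible 2 M <->
  forall (i1 i2 : 'I_m) (j1 j2 : 'I_n), (i1 < i2)%N -> (j1 < j2)%N ->
    mx_invertible (mx2 (M i1 j1) (M i1 j2) (M i2 j1) (M i2 j2)).
Proof.
pose pair k (x y : 'I_k) (h : 'I_2) := if h == 0 then x else y.
have homo_pair k (x y : 'I_k) : (x < y)%N ->
    forall h h' : 'I_2, (h < h')%N -> (pair k x y h < pair k x y h')%N.
  by move=> lt_xy [[|[|?]] ?] [[|[|?]] ?].
split=> [M2 i1 i2 j1 j2 lt_i lt_j | M2 f g homo_f homo_g].
  have := M2 _ _ (homo_pair _ _ _ lt_i) (homo_pair _ _ _ lt_j).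
  by rewrite [X in mx_invertible X]mx2_eta !mxE.
rewrite [X in mx_invertible X]mx2_eta !mxE.
by apply: M2; [apply: homo_f | apply: homo_g].
Qed.

Lemma all_sub_invertible_full n (M : 'M[R]_n) :
  all_sub_invertible n M <-> mx_invertible M.
Proof.
split=> [Mn | invM f g homo_f homo_g].
  by have := Mn id id; rewrite mxsub_id; apply.
by rewrite (mxsub_eq_id (homo_ltn_ord_id homo_f) (homo_ltn_ord_id homo_g)).
Qed.

End SubInvertible.

Section UnitIdentities.
Variable R : unitRingType.
Implicit Types x y : R.

Lemma subVr_factor x y :
  x \is a GRing.unit -> y \is a GRing.unit -> y^-1 - x^-1 = y^-1 * (x - y) * x^-1.
Proof. by move=> ux uy; rewrite mulrBr mulrBl mulrK // mulVr // mul1r. Qed.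

Lemma unitr_subVr x y :
    x \is a GRing.unit -> y \is a GRing.unit -> x - y \is a GRing.unit ->
  y^-1 - x^-1 \is a GRing.unit.
Proof. by move=> ux uy uxy; rewrite subVr_factor // !unitrMr ?unitrV. Qed.

Lemma invr_subVr x y :
    x \is a GRing.unit -> y \is a GRing.unit -> x - y \is a GRing.unit ->
  (y^-1 - x^-1)^-1 = x * (x - y)^-1 * y.
Proof.
by move=> ux uy uxy; rewrite subVr_factor // !invrM ?unitrMr ?unitrV // !invrK mulrA.
Qed.

Lemma mulr_subV1_invr_subV x y :
    x \is a GRing.unit -> y \is a GRing.unit -> x - y \is a GRing.unit ->
  (x^-1 - 1) * (y^-1 - x^-1)^-1 = (x - 1) * (y - x)^-1 * y.
Proof.
move=> ux uy uxy; rewrite invr_subVr // !mulrA mulrBl mulVr // mul1r.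
by rewrite -[x - y]opprB invrN mulrN mulNr -[x - 1]opprB !mulNr.
Qed.

End UnitIdentities.

Section HatMatrix.
Variable R : unitRingType.

Lemma mx_invertible_hat n (D : 'M[R]_n) :
  mx_invertible (block_mx (1%:M : 'M_1) (const_mx 1) (const_mx 1) D) <->
  mx_invertible (D - const_mx 1).
Proof.
rewrite mx_invertible_schur.
suff -> : (const_mx 1 : 'cV[R]_n) *m (const_mx 1 : 'rV_n) = const_mx 1 by [].
by apply/matrixP=> i j; rewrite !mxE big_ord1 !mxE mulr1.
Qed.

Lemma Amx_block (a b c d : R) :
  Amx a b c d = block_mx (1%:M : 'M_1) (const_mx 1) (const_mx 1) (mx2 a b c d).
Proof.
rewrite -(@submxK _ 1 2 1 2 (Amx a b c d)) [drsubmx _]mx2_eta.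
f_equal; last congr mx2; rewrite ?mxE //.
all: by apply/matrixP=> i j; rewrite !mxE !ord1 //=; case: i j => [[|[|?]] ?] [[|[|?]] ?].
Qed.

Lemma mx_invertible_Amx (a b c d : R) :
  mx_invertible (Amx a b c d) <-> mx_invertible (mx2 (a - 1) (b - 1) (c - 1) (d - 1)).
Proof.
rewrite Amx_block mx_invertible_hat.
by rewrite [const_mx 1 in X in mx_invertible X]mx2_eta !mxE mx2_sub.
Qed.

Lemma J2_Amx (a b c d : R) : J2 (Amx a b c d) = Amx a^-1 c^-1 b^-1 d^-1.
Proof.
apply/matrixP=> i j; rewrite !mxE.
by case: i j => [[|[|[|?]]] ?] [[|[|[|?]]] ?] //=; rewrite invr1.
Qed.

Lemma Amx_minors_invertible (a b c d : R) :
  all_sub_invertible 1 (Amx a b c d) /\ all_sub_invertible 2 (Amx a b c d) <->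
  a \is a GRing.unit /\ b \is a GRing.unit /\ c \is a GRing.unit /\
  d \is a GRing.unit /\ a - 1 \is a GRing.unit /\ b - 1 \is a GRing.unit /\
  c - 1 \is a GRing.unit /\ d - 1 \is a GRing.unit /\ d - c \is a GRing.unit /\
  d - b \is a GRing.unit /\ c - a \is a GRing.unit /\ b - a \is a GRing.unit /\
  d * b^-1 - c * a^-1 \is a GRing.unit.
Proof.
rewrite all_sub_invertible1P all_sub_invertible2P; split=> [[A1 A2] | ].
  move: (A1 1 1) (A1 1 2) (A1 2 1) (A1 2 2); rewrite !mxE /= => ua ub uc ud.
  move: (A2 0 1 0 1 isT isT) (A2 0 1 0 2 isT isT) (A2 0 2 0 1 isT isT)
    (A2 0 2 0 2 isT isT) (A2 0 2 1 2 isT isT) (A2 1 2 0 2 isT isT)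
    (A2 1 2 0 1 isT isT) (A2 0 1 1 2 isT isT) (A2 1 2 1 2 isT isT).
  rewrite !mxE /= => /mx_invertible_mx2_11xy ua1 /mx_invertible_mx2_11xy ub1
    /mx_invertible_mx2_11xy uc1 /mx_invertible_mx2_11xy ud1
    /mx_invertible_mx2_11xy udc /mx_invertible_mx2_1x1y udb
    /mx_invertible_mx2_1x1y uca /mx_invertible_mx2_11xy uba
    /(mx_invertible_mx2_unit_row _ _ ua ub) uabcd.
  by do !split.
move=> [ua [ub [uc [ud [ua1 [ub1 [uc1 [ud1 [udc [udb [uca [uba uabcd]]]]]]]]]]]].
split=> [i j | ].
  by case: i j => [[|[|[|?]]] ?] [[|[|[|?]]] ?]; rewrite !mxE //= unitr1.
move=> [[|[|[|?]]] ?] [[|[|[|?]]] ?] [[|[|[|?]]] ?] [[|[|[|?]]] ?] //= _ _;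
  by rewrite !mxE /= ?mx_invertible_mx2_11xy ?mx_invertible_mx2_1x1y
    ?mx_invertible_mx2_unit_row.
Qed.

Lemma mx_invertible_Amx_iff (a b c d : R) :
    b - a \is a GRing.unit -> d - c \is a GRing.unit ->
  mx_invertible (Amx a b c d) <->
  (d - c)^-1 * (c - 1) - (b - a)^-1 * (a - 1) \is a GRing.unit.
Proof.
move=> uba udc; rewrite mx_invertible_Amx -mx_invertible_mx2_subc !opprB !subrKA.
rewrite -(@mx_invertible_mx2_scaler _ (b - a)^-1 (d - c)^-1) ?unitrV //.
by rewrite !mulVr // mx_invertible_mx2_x1y1.
Qed.

Lemma mx_invertible_J2_Amx_iff (a b c d : R) :
    a \is a GRing.unit -> b \is a GRing.unit -> c \is a GRing.unit ->
    d \is a GRing.unit -> b - a \is a GRing.unit -> d - c \is a GRing.unit ->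
  mx_invertible (J2 (Amx a b c d)) <->
  (c - 1) * (d - c)^-1 * d - (a - 1) * (b - a)^-1 * b \is a GRing.unit.
Proof.
move=> ua ub uc ud uba udc.
have uab : a - b \is a GRing.unit by rewrite -opprB unitrN.
have ucd : c - d \is a GRing.unit by rewrite -opprB unitrN.
rewrite J2_Amx mx_invertible_Amx -mx_invertible_mx2_subr !opprB !subrKA.
rewrite -(@mx_invertible_mx2_scalec _ (b^-1 - a^-1)^-1 (d^-1 - c^-1)^-1)
  ?unitrV ?unitr_subVr //.
by rewrite !mulrV ?unitr_subVr // !mulr_subV1_invr_subV // mx_invertible_mx2_xy11.
Qed.

End HatMatrix.

Theorem lemma7 (R : unitRingType) (a b c d : R) :
  let A := Amx a b c d in
  let U := fun x : R => x \is a GRing.unit in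
  ((all_sub_invertible 1 A /\ all_sub_invertible 2 A) <->
     (U a /\ U b /\ U c /\ U d /\
      U (a - 1) /\ U (b - 1) /\ U (c - 1) /\ U (d - 1) /\
      U (d - c) /\ U (d - b) /\ U (c - a) /\ U (b - a) /\
      U (d * b^-1 - c * a^-1))) /\
  (all_sub_invertible 1 A -> all_sub_invertible 2 A ->
     (mx_invertible A <->
        U ((d - c)^-1 * (c - 1) - (b - a)^-1 * (a - 1))) /\
     (mx_invertible (J2 A) <->
        U ((c - 1) * (d - c)^-1 * d - (a - 1) * (b - a)^-1 * b))) /\
  (in_hatS A <->
     (U a /\ U b /\ U c /\ U d /\
      U (a - 1) /\ U (b - 1) /\ U (c - 1) /\ U (d - 1) /\
      U (d - c) /\ U (d - b) /\ U (c - a) /\ U (b - a) /\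
      U (d * b^-1 - c * a^-1) /\
      U ((d - c)^-1 * (c - 1) - (b - a)^-1 * (a - 1)) /\
      U ((c - 1) * (d - c)^-1 * d - (a - 1) * (b - a)^-1 * b))).
Proof.
move=> A U; rewrite {}/U {}/A.
have minors := Amx_minors_invertible a b c d.
have inverses : all_sub_invertible 1 (Amx a b c d) ->
    all_sub_invertible 2 (Amx a b c d) ->
    (mx_invertible (Amx a b c d) <->
       (d - c)^-1 * (c - 1) - (b - a)^-1 * (a - 1) \is a GRing.unit) /\
    (mx_invertible (J2 (Amx a b c d)) <->
       (c - 1) * (d - c)^-1 * d - (a - 1) * (b - a)^-1 * b \is a GRing.unit).
  move=> A1 A2.
  have [ua [ub [uc [ud [_ [_ [_ [_ [udc [_ [_ [uba _]]]]]]]]]]]] := minors.1 (conj A1 A2).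
  by split; [apply: mx_invertible_Amx_iff | apply: mx_invertible_J2_Amx_iff].
have hatA : in_hatM3 (Amx a b c d) by move=> i; rewrite !mxE; case: i => [[|[|[|?]]] ?].
have full := all_sub_invertible_full (Amx a b c d).
have and4_iff (P Q S T : Prop) : [/\ P, Q, S & T] <-> P /\ Q /\ S /\ T.
  by split=> [[] | [? [? []]]].
rewrite /in_hatS /in_S and4_iff; tauto.
Qed.
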